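(* Let $f_1,\dots,f_n:\mathbb{R}^p\to\mathbb{R}$ be continuously differentiable and $L$-smooth, let $g=\frac1n\sum_if_i\in\mathcal S(m,L)$ with $m>0$ and minimizer $x^*$, and let $i_k$ be sampled IID uniformly from $\{1,\dots,n\}$. Let $\gamma=-m$ if every $f_i\in\mathcal F(m,L)$, $\gamma=0$ if every $f_i\in\mathcal F(0,L)$, and $\gamma=L$ if the $f_i$ are only assumed $L$-smooth. Consider Finito with stepsize $\alpha>0$ and define $v^k=\frac1n\sum_{i=1}^nx_i^k-\alpha\sum_{i=1}^ny_i^k$. Given any testing rate with $1-\frac1n\le\rho^2\le1$, if there exist positive scalars $p_1,p_4$ and nonnegative scalars $\lambda_1,\lambda_2$ such that $$\alpha^2-2\lambda_2+p_1<0,$$ $$n(1-\rho^2)p_1-p_1+2\alpha^2-\frac{2\alpha^4}{\alpha^2-2\lambda_2+p_1}\le0,$$ $$n(1-\rho^2)p_4-p_4+\frac2{n^2}-\frac{2\alpha^2}{n^2(\alpha^2-2\lambda_2+p_1)}\le0,$$ $$p_4-\rho^2+2L\gamma\lambda_2-2Lm\lambda_1+1-\frac{((L+m)\lambda_1+(L-\gamma)\lambda_2-\alpha)^2}{\alpha^2-2\lambda_1-2\lambda_2+p_1}\le0,$$ then Finito with any initial $x_i^0,y_i^0\in\mathbb{R}^p$ satisfies $$\mathbb{E}\left[p_4\sum_{i=1}^n\|x_i^k-x^*\|^2+p_1\sum_{i=1}^n\|y_i^k-\nabla f_i(x^* )\|^2+\|v^k-x^*\|^2\right]\le\rho^{2k}R^0,$$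 where $R^0=p_4\sum_i\|x_i^0-x^*\|^2+p_1\sum_i\|y_i^0-\nabla f_i(x^* )\|^2+\|v^0-x^*\|^2$.
   Context: A continuously differentiable $f:\mathbb{R}^p\to\mathbb{R}$ is $L$-smooth if $\|\nabla f(x)-\nabla f(y)\|\le L\|x-y\|$; $\mathcal F(m,L)$ denotes the continuously differentiable, $L$-smooth, $m$-strongly convex functions; $\mathcal F(0,L)$ the convex $L$-smooth ones. $\mathcal S(m,L)$ is the set of continuously differentiable $g$ with a unique $x^*$ such that $\nabla g(x^* )=0$ and, for all $x$, $\begin{bmatrix}x-x^*\\\nabla g(x)\end{bmatrix}^T\begin{bmatrix}-2mLI_p&(L+m)I_p\\(L+m)I_p&-2I_p\end{bmatrix}\begin{bmatrix}x-x^*\\\nabla g(x)\end{bmatrix}\ge0$. Finito: at step $k$, $x_i^{k+1}=\frac1n\sum_{j=1}^nx_j^k-\alpha\sum_{j=1}^ny_j^k$ if $i=i_k$ and $x_i^{k+1}=x_i^k$ otherwise; then $y_i^{k+1}=\nabla f_i(x_i^{k+1})$ if $i=i_k$ and $y_i^{k+1}=y_i^k$ otherwise. Expectation is over the random indices. *)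

From HB Require Import structures.
From mathcomp Require Import all_boot all_order all_algebra.
From mathcomp Require Import all_classical all_reals all_analysis.
Set Implicit Arguments. Unset Strict Implicit. Unset Printing Implicit Defensive.
Import Order.TTheory GRing.Theory Num.Theory.
Import numFieldNormedType.Exports.
Local Open Scope ring_scope.

Definition dotv (R : realType) (p : nat) (u v : 'rV[R]_p) : R :=
  \sum_(j < p) u 0 j * v 0 j.
Definition sqnorm (R : realType) (p : nat) (u : 'rV[R]_p) : R := dotv u u.
Definition enorm (R : realType) (p : nat) (u : 'rV[R]_p) : R :=
  Num.sqrt (sqnorm u).

Definition is_gradient (R : realType) (p : nat)
  (f : 'rV[R]_p -> R) (gf : 'rV[R]_p -> 'rV[R]_p) : Prop :=
  forall x, differentiable f x /\ forall h, 'd f x h = dotv (gf x) h.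

Definition C1_grad (R : realType) (p : nat)
  (f : 'rV[R]_p -> R) (gf : 'rV[R]_p -> 'rV[R]_p) : Prop :=
  is_gradient f gf /\ continuous gf.

Definition L_smooth (R : realType) (p : nat) (L : R)
  (gf : 'rV[R]_p -> 'rV[R]_p) : Prop :=
  forall x y, enorm (gf x - gf y) <= L * enorm (x - y).

Definition strongly_convex (R : realType) (p : nat) (m : R)
  (f : 'rV[R]_p -> R) : Prop :=
  forall (x y : 'rV[R]_p) (t : R), 0 <= t -> t <= 1 ->
    f ((1 - t) *: x + t *: y)
      <= (1 - t) * f x + t * f y - m / 2 * t * (1 - t) * sqnorm (x - y).

Inductive fclass := StronglyConvexClass | ConvexClass | SmoothOnlyClass.

Definition class_gamma (R : realType) (m L : R) (c : fclass) : R :=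
  match c with
  | StronglyConvexClass => - m
  | ConvexClass => 0
  | SmoothOnlyClass => L
  end.

Definition in_class (R : realType) (p : nat) (m L : R) (c : fclass)
  (f : 'rV[R]_p -> R) (gf : 'rV[R]_p -> 'rV[R]_p) : Prop :=
  C1_grad f gf /\ L_smooth L gf /\
  match c with
  | StronglyConvexClass => strongly_convex m f
  | ConvexClass => strongly_convex 0 f
  | SmoothOnlyClass => True
  end.

(* g in S(m,L), expressed through the gradient gg of g, with xstar the
   unique stationary point. *)
Definition in_S (R : realType) (p : nat) (m L : R)
  (gg : 'rV[R]_p -> 'rV[R]_p) (xstar : 'rV[R]_p) : Prop :=
  gg xstar = 0 /\ (forall x, gg x = 0 -> x = xstar) /\
  forall x,
    0 <= - (2 * m * L) * sqnorm (x - xstar)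
         + 2 * (L + m) * dotv (x - xstar) (gg x)
         - 2 * sqnorm (gg x).

Definition finito_v (R : realType) (n p : nat) (alpha : R)
  (x y : 'I_n -> 'rV[R]_p) : 'rV[R]_p :=
  n%:R^-1 *: (\sum_(j < n) x j) - alpha *: (\sum_(j < n) y j).

Definition finito_step (R : realType) (n p : nat) (alpha : R)
  (gf : 'I_n -> 'rV[R]_p -> 'rV[R]_p)
  (st : ('I_n -> 'rV[R]_p) * ('I_n -> 'rV[R]_p)) (i : 'I_n)
  : ('I_n -> 'rV[R]_p) * ('I_n -> 'rV[R]_p) :=
  let x := st.1 in let y := st.2 in
  let z := finito_v alpha x y in
  let x' := fun j => if j == i then z else x j in
  let y' := fun j => if j == i then gf i (x' i) else y j in
  (x', y').

Definition finito_iter (R : realType) (n p : nat) (alpha : R)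
  (gf : 'I_n -> 'rV[R]_p -> 'rV[R]_p) (x0 y0 : 'I_n -> 'rV[R]_p)
  (s : seq 'I_n) : ('I_n -> 'rV[R]_p) * ('I_n -> 'rV[R]_p) :=
  foldl (finito_step alpha gf) (x0, y0) s.

(* Expectation over k IID uniform indices in {1..n}: the uniform average
   over all k-tuples of indices. *)
Definition expect_iid_uniform (R : realType) (n k : nat)
  (F : seq 'I_n -> R) : R :=
  (n%:R ^+ k)^-1 * \sum_(s : k.-tuple 'I_n) F (tval s).

Definition finito_lyap (R : realType) (n p : nat) (alpha p1 p4 : R)
  (gf : 'I_n -> 'rV[R]_p -> 'rV[R]_p) (xstar : 'rV[R]_p)
  (x y : 'I_n -> 'rV[R]_p) : R :=
  p4 * (\sum_(i < n) sqnorm (x i - xstar))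
  + p1 * (\sum_(i < n) sqnorm (y i - gf i xstar))
  + sqnorm (finito_v alpha x y - xstar).

From HB Require Import structures.
From mathcomp Require Import all_boot all_order all_algebra.
From mathcomp Require Import all_classical all_reals all_analysis.
From mathcomp Require Import ring lra.
Import Order.TTheory GRing.Theory Num.Theory.
Import numFieldNormedType.Exports.
Set Implicit Arguments. Unset Strict Implicit. Unset Printing Implicit Defensive.
Local Open Scope classical_set_scope.
Local Open Scope ring_scope.

(** For one step of Finito, add to the expected change of the Lyapunov
    function [lambda1] times the sector inequality of [g] at [v^k] and
    [lambda2] times the average over [i] of the sector inequalities of the
    [f_i] between [x*] and [v^k] (these follow from smoothness and, for the
    convex classes, from co-coercivity).  After centering every variable at
    the optimum, the result is a combination, with nonpositive coefficients
    under the four scalar conditions, of sums of squares and of one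
    two-variable quadratic form whose negativity is the Schur-complement form
    of the last condition.  Hence the expected Lyapunov function contracts by
    [rho^2] at each step, and averaging over the first index and inducting on
    [k] gives the rate [rho^(2k)]. *)

Lemma discriminant_le0 (R : rcfType) (a b c : R) :
  (forall s, 0 <= a * s ^+ 2 + b * s + c) -> b ^+ 2 <= 4 * a * c.
Proof.
move=> ge0; rewrite -subr_le0.
have := @deg_le2_poly_ge0 R (Poly [:: c; b; a]) (size_Poly _).
rewrite !coef_Poly /=; apply=> s.
rewrite !horner_cons hornerC (_ : _ + _ = a * s ^+ 2 + b * s + c) //; ring.
Qed.

Lemma le0_of_forall_le_mul (R : realFieldType) (A K : R) :
  (forall t, 0 < t -> t <= 1 -> A <= t * K) -> A <= 0.
Proof.
move=> le_tK; rewrite leNgt; apply/negP => A_gt0.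
pose t := A / (A + `|K|).
have AK_gt0 : 0 < A + `|K| by rewrite ltr_wpDr.
have t_gt0 : 0 < t by rewrite divr_gt0.
have tAK : t * (A + `|K|) = A by rewrite divfK ?gt_eqF.
have := le_tK t t_gt0; rewrite ler_pdivrMr // mul1r lerDl => /(_ (normr_ge0 K)).
have := ler_norm K; nra.
Qed.

Section InnerProduct.
Variables (R : realType) (p : nat).
Implicit Types (u v w x y : 'rV[R]_p) (k : R).

Lemma dotvC u v : dotv u v = dotv v u.
Proof. by apply: eq_bigr => j _; rewrite mulrC. Qed.

Lemma dotvDl u v w : dotv (u + v) w = dotv u w + dotv v w.
Proof. by rewrite /dotv -big_split; apply: eq_bigr => j _; rewrite mxE mulrDl. Qed.

Lemma dotvZl k u v : dotv (k *: u) v = k * dotv u v.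
Proof. by rewrite /dotv mulr_sumr; apply: eq_bigr => j _; rewrite mxE mulrA. Qed.

Lemma dotvNl u v : dotv (- u) v = - dotv u v.
Proof. by rewrite -scaleN1r dotvZl mulN1r. Qed.

Lemma dotvBl u v w : dotv (u - v) w = dotv u w - dotv v w.
Proof. by rewrite dotvDl dotvNl. Qed.

Lemma dotv0l v : dotv 0 v = 0.
Proof. by rewrite -(scale0r 0) dotvZl mul0r. Qed.

Lemma dotvDr u v w : dotv u (v + w) = dotv u v + dotv u w.
Proof. by rewrite dotvC dotvDl !(dotvC u). Qed.

Lemma dotvZr k u v : dotv u (k *: v) = k * dotv u v.
Proof. by rewrite dotvC dotvZl dotvC. Qed.

Lemma dotvNr u v : dotv u (- v) = - dotv u v.
Proof. by rewrite dotvC dotvNl dotvC. Qed.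

Lemma dotvBr u v w : dotv u (v - w) = dotv u v - dotv u w.
Proof. by rewrite dotvDr dotvNr. Qed.

Lemma dotv0r u : dotv u 0 = 0.
Proof. by rewrite dotvC dotv0l. Qed.

Lemma dotv_suml n (F : 'I_n -> 'rV[R]_p) v : dotv (\sum_i F i) v = \sum_i dotv (F i) v.
Proof. by elim/big_ind2: _ => [|u1 r1 u2 r2 <- <-|i _] //; rewrite ?dotv0l ?dotvDl. Qed.

Lemma dotv_sumr n u (F : 'I_n -> 'rV[R]_p) : dotv u (\sum_i F i) = \sum_i dotv u (F i).
Proof. by rewrite dotvC dotv_suml; apply: eq_bigr => i _; rewrite dotvC. Qed.

Lemma sqnorm_ge0 u : 0 <= sqnorm u.
Proof. by apply: sumr_ge0 => j _; rewrite -expr2 sqr_ge0. Qed.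

Lemma sqnormZ k u : sqnorm (k *: u) = k ^+ 2 * sqnorm u.
Proof. by rewrite /sqnorm dotvZl dotvZr mulrA expr2. Qed.

Lemma enorm_ge0 u : 0 <= enorm u.
Proof. exact: sqrtr_ge0. Qed.

Lemma sqr_enorm u : enorm u ^+ 2 = sqnorm u.
Proof. by rewrite sqr_sqrtr // sqnorm_ge0. Qed.

Lemma enormZ k u : enorm (k *: u) = `|k| * enorm u.
Proof. by rewrite /enorm sqnormZ sqrtrM ?sqr_ge0 // sqrtr_sqr. Qed.

Lemma dotv_cauchy_schwarz u v : `|dotv u v| <= enorm u * enorm v.
Proof.
have discr : (2 * dotv u v) ^+ 2 <= 4 * sqnorm v * sqnorm u.
  apply: discriminant_le0 => s; rewrite (_ : _ + _ = sqnorm (u + s *: v)) ?sqnorm_ge0 //.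
  by rewrite /sqnorm !(dotvDl, dotvDr, dotvZl, dotvZr) (dotvC v u); ring.
rewrite -(ler_pXn2r (n := 2)) ?nnegrE ?mulr_ge0 ?enorm_ge0 //.
by rewrite real_normK ?num_real // exprMn !sqr_enorm; lra.
Qed.

Lemma quadratic_form_le0 (A K C : R) x y :
  A < 0 -> K ^+ 2 <= A * C -> A * sqnorm x + 2 * K * dotv x y + C * sqnorm y <= 0.
Proof.
move=> A_lt0 discr; rewrite -(nmulr_rge0 _ A_lt0).
have -> : A * (A * sqnorm x + 2 * K * dotv x y + C * sqnorm y)
          = sqnorm (A *: x + K *: y) + (A * C - K ^+ 2) * sqnorm y.
  by rewrite /sqnorm !(dotvDl, dotvDr, dotvZl, dotvZr) (dotvC y x); ring.
by rewrite addr_ge0 ?sqnorm_ge0 // mulr_ge0 ?sqnorm_ge0 // subr_ge0.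
Qed.

End InnerProduct.

Section SmoothFunctions.
Variables (R : realType) (p : nat) (f : 'rV[R]_p -> R) (g : 'rV[R]_p -> 'rV[R]_p).
Hypothesis f_grad : is_gradient f g.
Implicit Types (x y d : 'rV[R]_p) (s t : R).

Lemma is_derive_line x d t :
  is_derive t 1 (fun s => f (x + s *: d)) (dotv (g (x + t *: d)) d).
Proof.
have [df <-] := f_grad (x + t *: d).
have quotE : (fun h : R => h^-1 *: (((fun s => f (x + s *: d)) \o shift t) (h *: 1)
                                    - f (x + t *: d)))
           = (fun h : R => h^-1 *: ((f \o shift (x + t *: d)) (h *: d) - f (x + t *: d))).
  by apply/funext => h /=; rewrite [h *: 1]mulr1 scalerDl addrCA.
have df_d : derivable f (x + t *: d) d by exact: diff_derivable.
by split; rewrite ?/derivable ?/derive quotE // -deriveE.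
Qed.

Variable L : R.
Hypothesis g_smooth : L_smooth L g.

Lemma dotv_gradient_increment_le x d t :
  0 <= t -> `|dotv (g (x + t *: d) - g x) d| <= L * t * sqnorm d.
Proof.
move=> t_ge0; apply: le_trans (dotv_cauchy_schwarz _ _) _.
have := g_smooth (x + t *: d) x.
rewrite [x + _ - x]addrC addKr enormZ ger0_norm // => smooth.
by rewrite -sqr_enorm expr2 !mulrA ler_wpM2r ?enorm_ge0 // -mulrA.
Qed.

Lemma smooth_upper_bound x d : f (x + d) <= f x + dotv (g x) d + L / 2 * sqnorm d.
Proof.
pose q : {poly R} := dotv (g x) d *: 'X + (L / 2 * sqnorm d) *: 'X^2.
pose psi s := f (x + s *: d) - q.[s].
have dpsi t : is_derive t 1 psi (dotv (g (x + t *: d)) d - q^`().[t]).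
  exact: is_deriveB (is_derive_line x d t) (is_derive_poly q t).
have : psi 1 <= psi 0.
  apply: (ler0_derive1_le_cc (a := 0) (b := 1)); rewrite ?bound_itvE ?ler01 //.
  - move=> t; rewrite in_itv /= => /andP[t_gt0 _].
    rewrite derive1E (@derive_val _ _ _ _ _ _ _ (dpsi t)) /q.
    rewrite derivD !derivZ derivX derivXn !hornerE /=.
    have := dotv_gradient_increment_le x d (ltW t_gt0); rewrite dotvBl.
    move/(le_trans (ler_norm _)); lra.
  - by apply: derivable_within_continuous => t _; have [] := dpsi t.
rewrite /psi /q !hornerE /= !mulr1 !mulr0 scale1r scale0r addr0; lra.
Qed.

Lemma strongly_convex_lower_bound mu x d : strongly_convex mu f ->
  f x + dotv (g x) d + mu / 2 * sqnorm d <= f (x + d).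
Proof.
move=> convex; rewrite -subr_le0.
apply: (le0_of_forall_le_mul (K := (L + mu / 2) * sqnorm d)) => t t_gt0 t_le1.
have line_cont : {within `[0, t], continuous (fun s => f (x + s *: d))}.
  by apply: derivable_within_continuous => s _; have [] := is_derive_line x d s.
have [c] := MVT t_gt0 (fun s _ => is_derive_line x d s) line_cont.
rewrite in_itv /= scale0r addr0 subr0 => /andP[c_gt0 c_lt_t] mvt.
have incr := dotv_gradient_increment_le x d (ltW c_gt0).
have Ld_ge0 : 0 <= L * sqnorm d.
  by rewrite -(pmulr_rge0 _ c_gt0) mulrCA mulrA (le_trans (normr_ge0 _) incr).
have := convex x (x + d) t (ltW t_gt0) t_le1.
rewrite scalerDr addrA -scalerDl subrK scale1r opprD addrA subrr sub0r.
rewrite /sqnorm dotvNl dotvNr opprK -/(sqnorm d) => conv.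
have lowG : dotv (g x) d - L * t * sqnorm d <= dotv (g (x + c *: d)) d.
  have : L * c * sqnorm d <= L * t * sqnorm d.
    by rewrite mulrAC [L * t * _]mulrAC ler_wpM2l // ltW.
  move: incr; rewrite dotvBl ler_norml => /andP[+ _]; lra.
rewrite -(ler_pM2l t_gt0); have := ler_wpM2l (ltW t_gt0) lowG; lra.
Qed.

Lemma strongly_convex_cocoercive mu x y : strongly_convex mu f ->
  mu * L * sqnorm (y - x) + sqnorm (g y - g x) <= (L + mu) * dotv (y - x) (g y - g x).
Proof.
move=> convex.
set D := y - x; set h := g y - g x - mu *: D.
have gE : g y - g x = h + mu *: D by rewrite subrK.
have yE : y = x + D by rewrite subrKC.
have gyE : g y = g x + (h + mu *: D) by rewrite -gE subrKC.
clearbody D h.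
(* h is the gradient increment of f - mu/2 |.|^2, which is convex and
   (L - mu)-smooth; [key] adds its first-order bounds at x + s h and y - s h. *)
have key s : 0 <= (L - mu) * sqnorm h * s ^+ 2 + (- 2 * sqnorm h) * s + dotv D h.
  have E1 := strongly_convex_lower_bound x (D - s *: h) convex.
  have U1 := smooth_upper_bound y (- (s *: h)).
  have E2 := strongly_convex_lower_bound y (s *: h - D) convex.
  have U2 := smooth_upper_bound x (s *: h).
  rewrite addrA -yE in E1.
  rewrite (_ : y + _ = x + s *: h) in E2; last by rewrite yE addrCA addrK addrC.
  move: E1 U1 E2 U2; rewrite gyE /sqnorm.
  rewrite !(dotvDl, dotvDr, dotvZl, dotvZr, dotvNl, dotvNr, dotvBl, dotvBr).
  rewrite ?(dotvC h D) ?(dotvC D (g x)) ?(dotvC h (g x)); lra.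
have QP : sqnorm h <= (L - mu) * dotv D h.
  have discr := discriminant_le0 key.
  have [Q_gt0 | Q_le0] := ltrP 0 (sqnorm h); first nra.
  have Q0 : sqnorm h = 0 by apply/eqP; rewrite eq_le Q_le0 sqnorm_ge0.
  have := dotv_cauchy_schwarz D h; rewrite /enorm Q0 sqrtr0 mulr0 normr_le0 => /eqP ->.
  by rewrite mulr0.
move: QP; rewrite gE /sqnorm !(dotvDl, dotvDr, dotvZl, dotvZr) (dotvC h D); lra.
Qed.

End SmoothFunctions.

Lemma in_class_sector (R : realType) (p : nat) (m L : R) (c : fclass)
    (f : 'rV[R]_p -> R) (g : 'rV[R]_p -> 'rV[R]_p) :
  in_class m L c f g -> forall x y,
  let gamma := class_gamma m L c in
  0 <= 2 * gamma * L * sqnorm (y - x) + 2 * (L - gamma) * dotv (y - x) (g y - g x)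
       - 2 * sqnorm (g y - g x).
Proof.
case: c => -[[grad _] [smooth conv]] x y /=.
- by have := strongly_convex_cocoercive grad smooth x y conv; lra.
- by have := strongly_convex_cocoercive grad smooth x y conv; lra.
have : sqnorm (g y - g x) <= L ^+ 2 * sqnorm (y - x).
  rewrite -!sqr_enorm -exprMn ler_sqr ?nnegrE ?enorm_ge0 //.
  exact: le_trans (enorm_ge0 _) (smooth y x).
lra.
Qed.

Section Gram.
Variables (R : realType) (n p : nat) (a b u : 'I_n -> 'rV[R]_p).

Definition gram (s t r : R) (q : 'rV[R]_p) : R :=
  \sum_i sqnorm (s *: a i + t *: b i + r *: u i + q).

Lemma gram_ge0 s t r q : 0 <= gram s t r q.
Proof. by apply: sumr_ge0 => i _; exact: sqnorm_ge0. Qed.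

Lemma gramE s t r q : gram s t r q =
  s ^+ 2 * (\sum_i sqnorm (a i)) + t ^+ 2 * (\sum_i sqnorm (b i))
  + r ^+ 2 * (\sum_i sqnorm (u i)) + 2 * s * t * (\sum_i dotv (a i) (b i))
  + 2 * s * r * (\sum_i dotv (a i) (u i)) + 2 * t * r * (\sum_i dotv (b i) (u i))
  + 2 * s * dotv (\sum_i a i) q + 2 * t * dotv (\sum_i b i) q
  + 2 * r * dotv (\sum_i u i) q + n%:R * sqnorm q.
Proof.
rewrite /gram (eq_bigr (fun i => s ^+ 2 * sqnorm (a i) + t ^+ 2 * sqnorm (b i)
  + r ^+ 2 * sqnorm (u i) + 2 * s * t * dotv (a i) (b i) + 2 * s * r * dotv (a i) (u i)
  + 2 * t * r * dotv (b i) (u i) + 2 * s * dotv (a i) q + 2 * t * dotv (b i) q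
  + 2 * r * dotv (u i) q + sqnorm q)); last first.
  move=> i _; rewrite /sqnorm !(dotvDl, dotvDr, dotvZl, dotvZr).
  by rewrite (dotvC (b i) (a i)) (dotvC (u i) (a i)) (dotvC (u i) (b i)) !(dotvC q); ring.
by rewrite !big_split /= -!mulr_sumr !dotv_suml sumr_const card_ord; ring.
Qed.

End Gram.

Section FinitoCertificate.
Variables (R : realType) (n p : nat) (alpha rho p1 p4 lambda1 lambda2 m L gamma : R).

(* With a_j = x_j - xstar, b_j = y_j - gf_j xstar, u_i = gf_i v - gf_i xstar and
   w = v - xstar: the expected next Lyapunov value minus rho^2 times the current
   one, plus the multiplier terms of the two sector conditions. *)
Definition finito_gap (a b u : 'I_n -> 'rV[R]_p) (w : 'rV[R]_p) : R :=
  n%:R^-1 * \sum_i (p4 * (\sum_j sqnorm (a j) - sqnorm (a i) + sqnorm w)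
                   + p1 * (\sum_j sqnorm (b j) - sqnorm (b i) + sqnorm (u i))
                   + sqnorm (w + n%:R^-1 *: (w - a i) - alpha *: (u i - b i)))
  - rho ^+ 2 * (p4 * \sum_j sqnorm (a j) + p1 * \sum_j sqnorm (b j) + sqnorm w)
  + lambda1 * (- (2 * m * L) * sqnorm w + 2 * (L + m) * dotv w (n%:R^-1 *: \sum_i u i)
               - 2 * sqnorm (n%:R^-1 *: \sum_i u i))
  + lambda2 * (n%:R^-1 * \sum_i (2 * gamma * L * sqnorm w + 2 * (L - gamma) * dotv w (u i)
                                 - 2 * sqnorm (u i))).

Hypothesis n_gt0 : (0 < n)%N.
Hypothesis lambda1_ge0 : 0 <= lambda1.
Let D := alpha ^+ 2 - 2 * lambda2 + p1.
Hypothesis D_lt0 : D < 0.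
Hypothesis cond_p1 : n%:R * (1 - rho ^+ 2) * p1 - p1 + 2 * alpha ^+ 2 - 2 * alpha ^+ 4 / D <= 0.
Hypothesis cond_p4 : n%:R * (1 - rho ^+ 2) * p4 - p4 + 2 / n%:R ^+ 2
    - 2 * alpha ^+ 2 / (n%:R ^+ 2 * D) <= 0.
Hypothesis cond_v : p4 - rho ^+ 2 + 2 * L * gamma * lambda2 - 2 * L * m * lambda1 + 1
    - ((L + m) * lambda1 + (L - gamma) * lambda2 - alpha) ^+ 2
      / (alpha ^+ 2 - 2 * lambda1 - 2 * lambda2 + p1) <= 0.

Let D' := alpha ^+ 2 - 2 * lambda1 - 2 * lambda2 + p1.
Let kappa := 1 - n%:R^-1 - rho ^+ 2.
Let eta := n%:R^-1 * (1 - alpha ^+ 2 / D).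
Let beta := alpha / (n%:R * D).
Let delta := alpha ^+ 2 / D.
Let K := (L + m) * lambda1 + (L - gamma) * lambda2 - alpha.
Let P := p4 - rho ^+ 2 + 2 * L * gamma * lambda2 - 2 * L * m * lambda1 + 1.
Let C := P - n%:R^-2 + alpha ^+ 2 / (n%:R ^+ 2 * D).

Let n_gt0R : 0 < n%:R :> R. Proof. by rewrite ltr0n. Qed.
Let n_neq0 : n%:R != 0 :> R. Proof. by rewrite gt_eqF. Qed.
Let D_neq0 : D != 0. Proof. by rewrite lt_eqF. Qed.

(* Sum-of-squares certificate: the two [gram] terms are sum_i |a_i / n + alpha b_i|^2
   and sum_i |z_i - zbar|^2, where z_i = beta a_i - delta b_i + u_i has mean zbar. *)
Let finito_gapE a b u w : w = n%:R^-1 *: \sum_i a i - alpha *: \sum_i b i ->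
  let ubar := n%:R^-1 *: \sum_i u i in
  let Z := beta *: \sum_i a i - delta *: \sum_i b i + \sum_i u i in
  finito_gap a b u w =
    (p4 * kappa + 2 * eta / n%:R ^+ 2) * (\sum_i sqnorm (a i))
    + (p1 * kappa + 2 * eta * alpha ^+ 2) * (\sum_i sqnorm (b i))
    - eta * gram a b u n%:R^-1 alpha 0 0
    + D / n%:R * gram a b u beta (- delta) 1 (- n%:R^-1 *: Z)
    + (D' * sqnorm ubar + 2 * K * dotv ubar w + C * sqnorm w).
Proof.
move=> w_def ubar Z; rewrite /finito_gap.
rewrite !big_split /= -!mulr_sumr !big_split /= !sumrN !sumr_const card_ord -mulr_sumr.
rewrite -dotv_sumr -/ubar.
rewrite [\sum_(i < n) sqnorm (w + _ - _)](eq_bigr (fun i =>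
    sqnorm (- n%:R^-1 *: a i + alpha *: b i + - alpha *: u i + (1 + n%:R^-1) *: w))); last first.
  by move=> i _; congr sqnorm; apply/rowP => c; rewrite !mxE; ring.
rewrite -/(gram a b u (- n%:R^-1) alpha (- alpha) ((1 + n%:R^-1) *: w)) !gramE /ubar /Z w_def.
rewrite /sqnorm !(dotvDl, dotvDr, dotvZl, dotvZr, dotvNl, dotvNr, dotvBl, dotvBr) !dotv0r.
rewrite (dotvC (\sum_i b i) (\sum_i a i)) (dotvC (\sum_i u i) (\sum_i a i)).
rewrite (dotvC (\sum_i u i) (\sum_i b i)) /C /P /K /eta /kappa /beta /delta /D' /D.
by field; rewrite n_neq0; exact: D_neq0.
Qed.

Let coef_a_le0 : p4 * kappa + 2 * eta / n%:R ^+ 2 <= 0.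
Proof.
have -> : p4 * kappa + 2 * eta / n%:R ^+ 2 = (n%:R * (1 - rho ^+ 2) * p4 - p4
    + 2 / n%:R ^+ 2 - 2 * alpha ^+ 2 / (n%:R ^+ 2 * D)) / n%:R.
  by rewrite /kappa /eta; field; rewrite n_neq0; exact: D_neq0.
by rewrite pmulr_lle0 ?invr_gt0.
Qed.

Let coef_b_le0 : p1 * kappa + 2 * eta * alpha ^+ 2 <= 0.
Proof.
have -> : p1 * kappa + 2 * eta * alpha ^+ 2 = (n%:R * (1 - rho ^+ 2) * p1 - p1
    + 2 * alpha ^+ 2 - 2 * alpha ^+ 4 / D) / n%:R.
  by rewrite /kappa /eta; field; rewrite n_neq0; exact: D_neq0.
by rewrite pmulr_lle0 ?invr_gt0.
Qed.

Let eta_ge0 : 0 <= eta.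
Proof.
rewrite mulr_ge0 ?invr_ge0 ?ler0n // subr_ge0.
by rewrite (le_trans _ ler01) // mulr_ge0_le0 ?sqr_ge0 // invr_le0 ltW.
Qed.

Let D'_lt0 : D' < 0.
Proof. by move: D_lt0 lambda1_ge0; rewrite /D' /D; lra. Qed.

Let schur_complement : K ^+ 2 <= D' * C.
Proof.
have C_le_P : C <= P.
  have : 0 <= n%:R^-2 :> R by rewrite invr_ge0 exprn_ge0 ?ler0n.
  have : alpha ^+ 2 / (n%:R ^+ 2 * D) <= 0.
    by rewrite mulr_ge0_le0 ?sqr_ge0 // invr_le0 pmulr_rle0 ?exprn_gt0 // ltW.
  rewrite /C; lra.
have K_le : K ^+ 2 <= D' * P.
  have -> : D' * P = K ^+ 2 + D' * (P - K ^+ 2 / D') by field; rewrite lt_eqF.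
  by rewrite lerDl mulr_le0 // ltW.
by rewrite (le_trans K_le) // ler_wnM2l // ltW.
Qed.

Lemma finito_gap_le0 a b u w :
  w = n%:R^-1 *: \sum_i a i - alpha *: \sum_i b i -> finito_gap a b u w <= 0.
Proof.
move=> /finito_gapE -> /=.
have := quadratic_form_le0 (n%:R^-1 *: \sum_i u i) w D'_lt0 schur_complement.
have sum_ge0 (e : 'I_n -> 'rV[R]_p) : 0 <= \sum_i sqnorm (e i).
  by apply: sumr_ge0 => i _; exact: sqnorm_ge0.
have := mulr_le0_ge0 coef_a_le0 (sum_ge0 a).
have := mulr_le0_ge0 coef_b_le0 (sum_ge0 b).
have := mulr_ge0 eta_ge0 (gram_ge0 a b u n%:R^-1 alpha 0 0).
have D_n_le0 : D / n%:R <= 0 by rewrite pmulr_lle0 ?invr_gt0 // ltW.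
have := mulr_le0_ge0 D_n_le0 (gram_ge0 a b u beta (- delta) 1
  (- n%:R^-1 *: (beta *: \sum_i a i - delta *: \sum_i b i + \sum_i u i))).
lra.
Qed.

End FinitoCertificate.

Lemma sum_update (V : zmodType) (T : Type) (n : nat) (i : 'I_n)
    (F : 'I_n -> T -> V) (z : T) (zs : 'I_n -> T) :
  \sum_j F j (if j == i then z else zs j) = \sum_j F j (zs j) - F i (zs i) + F i z.
Proof.
rewrite (bigD1 i) //= eqxx [in RHS](bigD1 i) //= [F i (zs i) + _]addrC addrK addrC.
by congr (_ + _); apply: eq_bigr => j /negbTE ->.
Qed.

Section FinitoStep.
Variables (R : realType) (n p : nat) (alpha p1 p4 : R).
Variables (gf : 'I_n -> 'rV[R]_p -> 'rV[R]_p) (xstar : 'rV[R]_p) (x y : 'I_n -> 'rV[R]_p).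
Let v := finito_v alpha x y.
Let step := finito_step alpha gf (x, y).

Lemma finito_lyap_step i :
  finito_lyap alpha p1 p4 gf xstar (step i).1 (step i).2 =
    p4 * (\sum_j sqnorm (x j - xstar) - sqnorm (x i - xstar) + sqnorm (v - xstar))
  + p1 * (\sum_j sqnorm (y j - gf j xstar) - sqnorm (y i - gf i xstar)
          + sqnorm (gf i v - gf i xstar))
  + sqnorm (v - xstar + n%:R^-1 *: (v - xstar - (x i - xstar))
            - alpha *: (gf i v - gf i xstar - (y i - gf i xstar))).
Proof.
rewrite /finito_lyap /step /= eqxx.
rewrite (sum_update i (fun _ z => sqnorm (z - xstar))).
rewrite (sum_update i (fun j z => sqnorm (z - gf j xstar))).
congr (_ + _ + sqnorm _).
rewrite {1}/finito_v (sum_update i (fun _ z => z)) (sum_update i (fun _ z => z)) /v.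
by apply/rowP => c; rewrite !(mxE, summxE); ring.
Qed.

Variables (rho lambda1 lambda2 m L : R) (c : fclass) (f : 'I_n -> 'rV[R]_p -> R).
Let gamma := class_gamma m L c.
Hypothesis n_gt0 : (0 < n)%N.
Hypothesis f_class : forall i, in_class m L c (f i) (gf i).
Hypothesis g_S : in_S m L (fun z => n%:R^-1 *: \sum_i gf i z) xstar.
Hypotheses (lambda1_ge0 : 0 <= lambda1) (lambda2_ge0 : 0 <= lambda2).
Hypothesis D_lt0 : alpha ^+ 2 - 2 * lambda2 + p1 < 0.
Hypothesis cond_p1 : n%:R * (1 - rho ^+ 2) * p1 - p1 + 2 * alpha ^+ 2
    - 2 * alpha ^+ 4 / (alpha ^+ 2 - 2 * lambda2 + p1) <= 0.
Hypothesis cond_p4 : n%:R * (1 - rho ^+ 2) * p4 - p4 + 2 / n%:R ^+ 2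
    - 2 * alpha ^+ 2 / (n%:R ^+ 2 * (alpha ^+ 2 - 2 * lambda2 + p1)) <= 0.
Hypothesis cond_v : p4 - rho ^+ 2 + 2 * L * gamma * lambda2 - 2 * L * m * lambda1 + 1
    - ((L + m) * lambda1 + (L - gamma) * lambda2 - alpha) ^+ 2
      / (alpha ^+ 2 - 2 * lambda1 - 2 * lambda2 + p1) <= 0.

Lemma finito_one_step :
  n%:R^-1 * \sum_i finito_lyap alpha p1 p4 gf xstar (step i).1 (step i).2
  <= rho ^+ 2 * finito_lyap alpha p1 p4 gf xstar x y.
Proof.
have n_neq0 : n%:R != 0 :> R by rewrite pnatr_eq0 -lt0n.
have [gS0 [_ g_sector]] := g_S.
have sum_gstar : \sum_i gf i xstar = 0.
  by apply/eqP; move/eqP: gS0; rewrite scaler_eq0 invr_eq0 (negbTE n_neq0).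
have v_center : v - xstar = n%:R^-1 *: \sum_j (x j - xstar) - alpha *: \sum_j (y j - gf j xstar).
  rewrite !sumrB sum_gstar subr0 sumr_const card_ord scalerBr -[xstar *+ n]scaler_nat.
  by rewrite scalerA mulVf // scale1r /v /finito_v addrAC.
have := finito_gap_le0 n_gt0 lambda1_ge0 D_lt0 cond_p1 cond_p4 cond_v
  (fun i => gf i v - gf i xstar) v_center.
rewrite /finito_gap /= sumrB sum_gstar subr0.
rewrite (eq_bigr _ (fun i _ => finito_lyap_step i)).
have := mulr_ge0 lambda1_ge0 (g_sector v).
have sectors_ge0 : 0 <= \sum_i (2 * gamma * L * sqnorm (v - xstar)
    + 2 * (L - gamma) * dotv (v - xstar) (gf i v - gf i xstar) - 2 * sqnorm (gf i v - gf i xstar)).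
  by apply: sumr_ge0 => i _; exact: in_class_sector (f_class i) xstar v.
have n_inv_ge0 : 0 <= n%:R^-1 :> R by rewrite invr_ge0 ler0n.
have := mulr_ge0 lambda2_ge0 (mulr_ge0 n_inv_ge0 sectors_ge0).
rewrite /finito_lyap -/v; lra.
Qed.

End FinitoStep.

Section UniformExpectation.
Variables (R : realType) (n : nat).
Implicit Types (F : seq 'I_n -> R).

Lemma sum_tuple_cons k F :
  \sum_(s : k.+1.-tuple 'I_n) F s = \sum_i \sum_(s : k.-tuple 'I_n) F (i :: s).
Proof.
rewrite pair_big /= (reindex (fun q : 'I_n * k.-tuple 'I_n => [tuple of q.1 :: q.2])) //.
exists (fun s : k.+1.-tuple 'I_n => (thead s, [tuple of behead s])) => [[i s] _|s _].
  by congr (_, _); apply: val_inj.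
by apply: val_inj; rewrite /= [in RHS](tuple_eta s).
Qed.

Lemma expect_iid_uniform0 F : expect_iid_uniform 0 F = F [::].
Proof.
rewrite /expect_iid_uniform (big_pred1 [tuple]) ?expr0 ?invr1 ?mul1r //.
by move=> s; apply/esym/eqP; exact: tuple0.
Qed.

Lemma expect_iid_uniformS k F :
  expect_iid_uniform k.+1 F = n%:R^-1 * \sum_i expect_iid_uniform k (fun s => F (i :: s)).
Proof.
by rewrite /expect_iid_uniform sum_tuple_cons -mulr_sumr exprS invfM mulrA.
Qed.

Lemma expect_iid_uniform_foldl_le (S : Type) (step : S -> 'I_n -> S) (V : S -> R) (r : R) :
  0 <= r -> (forall s, n%:R^-1 * \sum_i V (step s i) <= r * V s) ->
  forall k s0, expect_iid_uniform k (fun l => V (foldl step s0 l)) <= r ^+ k * V s0.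
Proof.
move=> r_ge0 contract; elim=> [|k IH] s0.
  by rewrite expect_iid_uniform0 expr0 mul1r.
rewrite expect_iid_uniformS /=.
have n_inv_ge0 : 0 <= n%:R^-1 :> R by rewrite invr_ge0 ler0n.
apply: le_trans (ler_wpM2l n_inv_ge0 (ler_sum _ (fun i _ => IH (step s0 i)))) _.
rewrite -mulr_sumr mulrCA exprSr -mulrA.
by rewrite ler_wpM2l ?exprn_ge0.
Qed.

End UniformExpectation.

Theorem corollary4 (R : realType) (n p : nat) (c : fclass)
  (f : 'I_n -> 'rV[R]_p -> R) (gf : 'I_n -> 'rV[R]_p -> 'rV[R]_p)
  (m L : R) (xstar : 'rV[R]_p)
  (alpha rho p1 p4 lambda1 lambda2 : R) :
  (0 < n)%N ->
  0 < m ->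
  (forall i, in_class m L c (f i) (gf i)) ->
  in_S m L (fun x => n%:R^-1 *: \sum_(i < n) gf i x) xstar ->
  0 < alpha ->
  1 - n%:R^-1 <= rho ^+ 2 -> rho ^+ 2 <= 1 ->
  0 < p1 -> 0 < p4 -> 0 <= lambda1 -> 0 <= lambda2 ->
  let gamma := class_gamma m L c in
  alpha ^+ 2 - 2 * lambda2 + p1 < 0 ->
  n%:R * (1 - rho ^+ 2) * p1 - p1 + 2 * alpha ^+ 2
    - 2 * alpha ^+ 4 / (alpha ^+ 2 - 2 * lambda2 + p1) <= 0 ->
  n%:R * (1 - rho ^+ 2) * p4 - p4 + 2 / n%:R ^+ 2
    - 2 * alpha ^+ 2 / (n%:R ^+ 2 * (alpha ^+ 2 - 2 * lambda2 + p1)) <= 0 ->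
  p4 - rho ^+ 2 + 2 * L * gamma * lambda2 - 2 * L * m * lambda1 + 1
    - ((L + m) * lambda1 + (L - gamma) * lambda2 - alpha) ^+ 2
      / (alpha ^+ 2 - 2 * lambda1 - 2 * lambda2 + p1) <= 0 ->
  forall (x0 y0 : 'I_n -> 'rV[R]_p) (k : nat),
    expect_iid_uniform k
      (fun s => let st := finito_iter alpha gf x0 y0 s in
                finito_lyap alpha p1 p4 gf xstar st.1 st.2)
    <= rho ^+ (2 * k) * finito_lyap alpha p1 p4 gf xstar x0 y0.
Proof.
move=> n_gt0 _ f_class g_S _ _ _ _ _ lambda1_ge0 lambda2_ge0 gamma D_lt0 cond_p1 cond_p4 cond_v.
move=> x0 y0 k; rewrite exprM.
apply: (expect_iid_uniform_foldl_le (step := finito_step alpha gf)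
  (V := fun st => finito_lyap alpha p1 p4 gf xstar st.1 st.2)); first exact: sqr_ge0.
move=> [x y]; exact: finito_one_step n_gt0 f_class g_S lambda1_ge0 lambda2_ge0
  D_lt0 cond_p1 cond_p4 cond_v.
Qed.
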